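(* Let $X_d=X^{\otimes d}$ and suppose $\lambda^X_k/\Lambda^X\sim\beta/(k(\ln k)(\ln\ln k)^{1+s})$ as $k\to\infty$, with $\beta>0$ and $s>0$. Then $$\ln\ln n^{X_d}(\varepsilon)\sim\Bigl(\frac{\beta d}{s\,|\ln(1-\varepsilon^2)|}\Bigr)^{1/s},\quad d\to\infty,\quad\text{for all }\varepsilon\in(0,1).$$
   Context: Let $X$ be a centered random element of a separable Hilbert space $H$ with $\mathbb E\|X\|^2<\infty$, covariance eigenvalues $\lambda^X_1\ge\lambda^X_2\ge\dots\ge0$ (with multiplicity), $\lambda^X_1>0$, trace $\Lambda^X$, and $\bar\lambda^X_k=\lambda^X_k/\Lambda^X$. $X_d=X^{\otimes d}$ is the centered random element of $H^{\otimes d}$ with covariance operator $(K^X)^{\otimes d}$; its eigenvalues are $\prod_{j=1}^d\lambda^X_{k_j}$. With $\bar\lambda^{X_d}_k$ the normalized nonincreasing eigenvalues of $X_d$, $n^{X_d}(\varepsilon)=\min\{n\in\mathbb N:\sum_{k>n}\bar\lambda^{X_d}_k\le\varepsilon^2\}$. *)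

From Stdlib Require Import Reals List.
Import ListNotations.
Open Scope R_scope.

(* Eigenvalues are indexed from 1: lam k for k >= 1 is lambda^X_k (lam 0 unused). *)

Definition valid_index (d : nat) (t : list nat) : Prop :=
  length t = d /\ Forall (fun k => (1 <= k)%nat) t.

(* Normalized eigenvalue of X_d attached to the multi-index t:
   prod_j lambda_{k_j} / (Lambda^X)^d = prod_j (lambda_{k_j} / Lambda^X). *)
Definition tensor_eig (lam : nat -> R) (Lam : R) (t : list nat) : R :=
  fold_right (fun k acc => (lam k / Lam) * acc) 1 t.

(* mu (1-based) is the nonincreasing enumeration, with multiplicity, of the
   normalized eigenvalues of X_d: there is a bijection sigma from {k >= 1}
   onto the valid multi-indices with mu k = tensor_eig (sigma k), and mu is
   nonincreasing. *)
Definition sorted_tensor_eig (lam : nat -> R) (Lam : R) (d : nat)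
    (mu : nat -> R) : Prop :=
  exists sigma : nat -> list nat,
    (forall k, (1 <= k)%nat -> valid_index d (sigma k)) /\
    (forall k l, (1 <= k)%nat -> (1 <= l)%nat -> sigma k = sigma l -> k = l) /\
    (forall t, valid_index d t -> exists k, (1 <= k)%nat /\ sigma k = t) /\
    (forall k, (1 <= k)%nat -> mu k = tensor_eig lam Lam (sigma k)) /\
    (forall k, (1 <= k)%nat -> mu (S k) <= mu k).

Definition tail_le (mu : nat -> R) (n : nat) (eps : R) : Prop :=
  exists T, infinite_sum (fun j => mu (n + 1 + j)%nat) T /\ T <= eps ^ 2.

Definition is_nX (lam : nat -> R) (Lam : R) (d : nat) (eps : R) (n : nat) : Prop :=
  exists mu, sorted_tensor_eig lam Lam d mu /\
    tail_le mu n eps /\ (forall m, tail_le mu m eps -> (n <= m)%nat).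

(* Write [p k = lam k / Lam] and [mass m = p 1 + ... + p m]. The multi-indices in the box
   [{1..m}^d] carry total eigenvalue mass [mass m ^ d]; since the eigenvalues of [X_d] are
   enumerated in decreasing order, [n^{X_d}(eps) <= m^d] as soon as [mass m ^ d >= 1 - eps^2],
   while conversely the first [n] eigenvalues carry at most [mass M ^ d + n p (M+1)].
   Comparing [p k] with [beta / (k ln k (ln ln k)^(1+s))], the derivative of
   [-beta / (s (ln ln k)^s)], gives [1 - mass m ~ beta / (s (ln ln m)^s)], so [mass m ^ d]
   crosses [1 - eps^2 = exp (-a)] where [(ln ln m)^s ~ beta d / (s a)]. Choosing [ln ln m]
   slightly above, resp. below, [(beta d / (s a))^(1/s)] in the two bounds gives the claim;
   the exponent [d] in [m^d] only costs [ln d], which is negligible. *)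

From Coquelicot Require Import Coquelicot.
From Stdlib Require Import Reals List Lra Lia.
Import ListNotations.
Open Scope R_scope.

Definition sumL {X : Type} (f : X -> R) (l : list X) : R :=
  fold_right (fun x acc => f x + acc) 0 l.

Lemma sumL_app {X} (f : X -> R) l1 l2 : sumL f (l1 ++ l2) = sumL f l1 + sumL f l2.
Proof. induction l1 as [|x l1 IH]; simpl; [lra|]. rewrite IH; lra. Qed.

Lemma sumL_map {X Y} (f : Y -> R) (g : X -> Y) l :
  sumL f (map g l) = sumL (fun x => f (g x)) l.
Proof. induction l; simpl; congruence. Qed.

Lemma sumL_scal {X} (f : X -> R) c l : sumL (fun x => c * f x) l = c * sumL f l.
Proof. induction l as [|x l IH]; simpl; [lra|]. rewrite IH; lra. Qed.

Lemma sumL_const {X} (c : R) (l : list X) : sumL (fun _ => c) l = INR (length l) * c.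
Proof.
  induction l as [|x l IH]; simpl length; [simpl; lra|].
  rewrite S_INR; simpl; rewrite IH; lra.
Qed.

Lemma sumL_ext {X} (f g : X -> R) l :
  (forall x, In x l -> f x = g x) -> sumL f l = sumL g l.
Proof.
  induction l as [|x l IH]; simpl; intros H; [lra|].
  rewrite (H x (or_introl eq_refl)), IH; auto.
Qed.

Lemma sumL_le {X} (f g : X -> R) l :
  (forall x, In x l -> f x <= g x) -> sumL f l <= sumL g l.
Proof.
  induction l as [|x l IH]; simpl; intros H; [lra|].
  assert (f x <= g x) by auto. assert (sumL f l <= sumL g l) by auto. lra.
Qed.

Lemma sumL_nonneg {X} (f : X -> R) l : (forall x, In x l -> 0 <= f x) -> 0 <= sumL f l.
Proof.
  intros H. replace 0 with (sumL (fun _ : X => 0) l) by (rewrite sumL_const; ring).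
  now apply sumL_le.
Qed.

Lemma sumL_filter {X} (f : X -> R) (b : X -> bool) l :
  sumL f l = sumL f (filter b l) + sumL f (filter (fun x => negb (b x)) l).
Proof. induction l as [|x l IH]; simpl; [lra|]. destruct (b x); simpl; rewrite IH; lra. Qed.

Lemma sumL_incl_le {X} (f : X -> R) (A B : list X) :
  NoDup A -> incl A B -> (forall x, In x B -> 0 <= f x) -> sumL f A <= sumL f B.
Proof.
  revert B; induction A as [|a A IH]; intros B HA HAB Hf; simpl.
  - now apply sumL_nonneg.
  - destruct (in_split a B (HAB a (or_introl eq_refl))) as [B1 [B2 ->]].
    inversion HA as [|? ? HaA HA']; subst.
    assert (sumL f A <= sumL f (B1 ++ B2)).
    { apply IH; auto.
      - intros x Hx. destruct (in_app_or _ _ _ (HAB x (or_intror Hx))) as [H|[H|H]];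
          apply in_or_app; subst; tauto.
      - intros x Hx; apply Hf. apply in_app_or in Hx; apply in_or_app; simpl; tauto. }
    rewrite !sumL_app in *; simpl. lra.
Qed.

Definition head_sum (u : nat -> R) (n : nat) : R := sumL u (seq 1 n).

Lemma head_sum_S u n : head_sum u (S n) = head_sum u n + u (S n).
Proof.
  unfold head_sum. rewrite seq_S, sumL_app. simpl. replace (1 + n)%nat with (S n) by lia. lra.
Qed.

Lemma head_sum_add u n k : head_sum u (n + k) = head_sum u n + sumL u (seq (S n) k).
Proof. unfold head_sum. now rewrite seq_app, sumL_app. Qed.

Lemma head_sum_telescope_le (u v : nat -> R) m :
  (forall k, (m <= k)%nat -> u (S k) <= v k - v (S k)) ->
  forall j, head_sum u (m + j) - head_sum u m <= v m - v (m + j)%nat.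
Proof.
  intros H j. induction j as [|j IH]; [rewrite Nat.add_0_r; lra|].
  rewrite Nat.add_succ_r, head_sum_S. specialize (H (m + j)%nat ltac:(lia)). lra.
Qed.

Lemma head_sum_telescope_ge (u v : nat -> R) m :
  (forall k, (m <= k)%nat -> v k - v (S k) <= u (S k)) ->
  forall j, v m - v (m + j)%nat <= head_sum u (m + j) - head_sum u m.
Proof.
  intros H j. induction j as [|j IH]; [rewrite Nat.add_0_r; lra|].
  rewrite Nat.add_succ_r, head_sum_S. specialize (H (m + j)%nat ltac:(lia)). lra.
Qed.

Lemma sum_f_R0_shift (u : nat -> R) a k :
  sum_f_R0 (fun j => u (a + j)%nat) k = sumL u (seq a (S k)).
Proof.
  induction k as [|k IH]; [simpl; rewrite Nat.add_0_r; lra|].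
  cbn [sum_f_R0]. rewrite IH, (seq_S (S k) a), sumL_app. simpl. lra.
Qed.

Fixpoint box (d m : nat) : list (list nat) :=
  match d with
  | O => [[]]
  | S d' => flat_map (fun k => map (cons k) (box d' m)) (seq 1 m)
  end.

Lemma In_box d m t :
  In t (box d m) <-> length t = d /\ Forall (fun k => 1 <= k <= m)%nat t.
Proof.
  revert t; induction d as [|d IH]; intros t; simpl.
  - split; [intros [<-|[]]; auto|].
    intros [Hl _]; destruct t; [now left|discriminate].
  - rewrite in_flat_map. split.
    + intros [k [Hk Ht]]. apply in_map_iff in Ht. destruct Ht as [t' [<- Ht']].
      apply IH in Ht'. apply in_seq in Hk. destruct Ht'. simpl; split; [lia|].
      constructor; auto; lia.
    + intros [Hl Hf]. destruct t as [|k t']; simpl in Hl; [lia|].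
      inversion Hf; subst. exists k; split; [apply in_seq; lia|].
      apply in_map, IH; auto.
Qed.

Lemma NoDup_box d m : NoDup (box d m).
Proof.
  induction d as [|d IH]; simpl; [repeat constructor; simpl; tauto|].
  generalize (seq_NoDup m 1). induction (seq 1 m) as [|a l IHl]; intros Hl; simpl; [constructor|].
  inversion Hl; subst. apply NoDup_app; auto.
  - apply NoDup_map_NoDup_ForallPairs; auto. intros x y _ _ H; now inversion H.
  - intros t G1 G2. apply in_map_iff in G1. destruct G1 as [x [<- _]].
    apply in_flat_map in G2. destruct G2 as [k [Hk G2]]. apply in_map_iff in G2.
    destruct G2 as [y [Hy _]]. inversion Hy; subst. contradiction.
Qed.

Lemma length_box d m : length (box d m) = (m ^ d)%nat.
Proof.
  induction d as [|d IH]; simpl; auto.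
  rewrite <- (length_seq m 1) at 2. rewrite <- IH.
  induction (seq 1 m) as [|a l IHl]; simpl; auto.
  rewrite length_app, length_map, IHl. lia.
Qed.

Lemma box_incl_of_valid d (L : list (list nat)) :
  (forall t, In t L -> valid_index d t) -> exists m, incl L (box d m).
Proof.
  intros HL. exists (list_max (concat L)). intros t Ht.
  destruct (HL t Ht) as [Hl Hv]. apply In_box. split; auto.
  assert (Hmax : Forall (fun k => k <= list_max (concat L))%nat (concat L))
    by (apply list_max_le; lia).
  rewrite Forall_forall in *. intros x Hx. split; [now apply Hv|].
  apply Hmax, in_concat. eauto.
Qed.

Lemma valid_index_of_box d m t : In t (box d m) -> valid_index d t.
Proof.
  intros H; apply In_box in H. destruct H as [Hl H]. split; auto.
  rewrite Forall_forall in *; intros x Hx; apply H in Hx; lia.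
Qed.

Lemma sum_tensor_eig_box lam Lam d m :
  sumL (tensor_eig lam Lam) (box d m) = head_sum (fun k => lam k / Lam) m ^ d.
Proof.
  induction d as [|d IH]; simpl; [unfold tensor_eig; simpl; lra|].
  rewrite <- IH. unfold head_sum.
  induction (seq 1 m) as [|a l IHl]; simpl; [lra|].
  rewrite sumL_app, IHl, sumL_map.
  change (fun x => tensor_eig lam Lam (a :: x)) with (fun x => lam a / Lam * tensor_eig lam Lam x).
  rewrite sumL_scal. lra.
Qed.

Definition loglog_weight (s x : R) : R := / (x * ln x * Rpower (ln (ln x)) (1 + s)).
Definition loglog_tail (s x : R) : R := / (s * Rpower (ln (ln x)) s).

Lemma ln_gt1 x : 4 <= x -> 1 < ln x.
Proof.
  intros Hx. rewrite <- (ln_exp 1). apply ln_increasing; [apply exp_pos|].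
  pose proof exp_le_3. lra.
Qed.

Lemma lnln_pos x : 4 <= x -> 0 < ln (ln x).
Proof. intros Hx. rewrite <- ln_1. apply ln_increasing; [lra|]. now apply ln_gt1. Qed.

Lemma loglog_weight_antitone s x y : 0 < s -> 4 <= x <= y ->
  loglog_weight s y <= loglog_weight s x.
Proof.
  intros Hs Hxy. pose proof (ln_gt1 x ltac:(lra)). pose proof (lnln_pos x ltac:(lra)).
  assert (ln x <= ln y) by (apply ln_le; lra).
  assert (ln (ln x) <= ln (ln y)) by (apply ln_le; lra).
  assert (Rpower (ln (ln x)) (1 + s) <= Rpower (ln (ln y)) (1 + s))
    by (apply Rle_Rpower_l; lra).
  assert (0 < Rpower (ln (ln x)) (1 + s)) by apply exp_pos.
  apply Rinv_le_contravar.
  - repeat apply Rmult_lt_0_compat; lra.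
  - apply Rmult_le_compat; try lra.
    + apply Rmult_le_pos; lra.
    + apply Rmult_le_compat; lra.
Qed.

Lemma loglog_tail_derive s x : 0 < s -> 4 <= x ->
  derivable_pt_lim (loglog_tail s) x (- loglog_weight s x).
Proof.
  intros Hs Hx. apply is_derive_Reals.
  pose proof (ln_gt1 x Hx). pose proof (lnln_pos x Hx).
  unfold loglog_tail, loglog_weight, Rpower. auto_derive.
  - repeat split; try lra. apply Rgt_not_eq, Rmult_lt_0_compat; [lra|apply exp_pos].
  - replace (exp ((1 + s) * ln (ln (ln x))))
      with (ln (ln x) * exp (s * ln (ln (ln x)))).
    2:{ rewrite Rmult_plus_distr_r, Rmult_1_l, exp_plus, (exp_ln (ln (ln x))); lra. }
    pose proof (exp_pos (s * ln (ln (ln x)))). field. repeat split; lra.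
Qed.

Lemma loglog_weight_le_tail_diff s x : 0 < s -> 4 <= x ->
  loglog_weight s (x + 1) <= loglog_tail s x - loglog_tail s (x + 1) <= loglog_weight s x.
Proof.
  intros Hs Hx.
  destruct (MVT_cor2 (loglog_tail s) (fun y => - loglog_weight s y) x (x + 1)) as [c [Hc Hcx]];
    [lra|intros c Hc; apply loglog_tail_derive; lra|].
  replace (loglog_tail s x - loglog_tail s (x + 1)) with (loglog_weight s c)
    by (replace (x + 1 - x) with 1 in Hc by ring; lra).
  split; apply loglog_weight_antitone; lra.
Qed.

Lemma loglog_weight_pos s x : 4 <= x -> 0 < loglog_weight s x.
Proof.
  intros Hx. pose proof (ln_gt1 x Hx).
  apply Rinv_0_lt_compat. repeat apply Rmult_lt_0_compat; try lra. apply exp_pos.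
Qed.

Lemma loglog_tail_pos s x : 0 < s -> 0 < loglog_tail s x.
Proof. intros Hs. apply Rinv_0_lt_compat, Rmult_lt_0_compat; [lra|apply exp_pos]. Qed.

Lemma loglog_tail_vanishes s th : 0 < s -> 0 < th ->
  exists X, forall x, X <= x -> loglog_tail s x <= th.
Proof.
  intros Hs Hth. set (Y := Rpower (/ (s * th)) (/ s)).
  exists (Rmax 4 (exp (exp Y))). intros x Hx.
  assert (H4 : 4 <= x) by (eapply Rle_trans; [apply Rmax_l|apply Hx]).
  assert (HY : Y <= ln (ln x)).
  { rewrite <- (ln_exp Y). apply ln_le; [apply exp_pos|].
    rewrite <- (ln_exp (exp Y)). apply ln_le; [apply exp_pos|].
    eapply Rle_trans; [apply Rmax_r|apply Hx]. }
  assert (HYs : / (s * th) <= Rpower (ln (ln x)) s).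
  { replace (/ (s * th)) with (Rpower Y s).
    - apply Rle_Rpower_l; [lra|split; [apply exp_pos|exact HY]].
    - unfold Y. rewrite Rpower_mult, Rinv_l, Rpower_1; [|apply Rinv_0_lt_compat; nra|lra].
      reflexivity. }
  unfold loglog_tail. replace th with (/ (s * / (s * th))) by (field; lra).
  apply Rinv_le_contravar; [apply Rmult_lt_0_compat, Rinv_0_lt_compat; nra|].
  apply Rmult_le_compat_l; lra.
Qed.

Lemma nat_above X : exists n : nat, X <= INR n.
Proof. destruct (INR_archimed 1 X) as [n Hn]; [lra|]. exists n. lra. Qed.

Lemma INR_ge4 k : (4 <= k)%nat -> 4 <= INR k.
Proof. intros Hk. replace 4 with (INR 4) by (simpl; lra). now apply le_INR. Qed.

Lemma nat_between x : 0 <= x -> exists n : nat, x <= INR n <= x + 1.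
Proof.
  intros Hx. destruct (nat_above x) as [k Hk]. induction k as [|k IH].
  - exists O. simpl in *. lra.
  - destruct (Rle_lt_dec x (INR k)) as [H|H]; auto.
    exists (S k). rewrite S_INR in *. lra.
Qed.

Lemma exp_gt_id x : x < exp x.
Proof. pose proof (exp_ineq1_le x). lra. Qed.

Lemma ln2_lt1 : ln 2 < 1.
Proof.
  rewrite <- (ln_exp 1). apply ln_increasing; [lra|]. pose proof (exp_ineq1 1). lra.
Qed.

Lemma exp_monotone x y : x <= y -> exp x <= exp y.
Proof. intros [H|H]; [left; now apply exp_increasing|rewrite H; lra]. Qed.

(* Holds also for [x <= 0], where Rocq's [ln x] is [0]. *)
Lemma ln_le_of_le x y : 1 <= y -> x <= y -> ln x <= ln y.
Proof.
  intros Hy Hxy. destruct (Rle_lt_dec x 0) as [Hx|Hx].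
  - assert (Hl : ln x = 0)
      by (unfold ln; destruct (Rlt_dec 0 x) as [h|h]; [exfalso; lra|reflexivity]).
    rewrite Hl, <- ln_1. apply ln_le; lra.
  - apply ln_le; lra.
Qed.

Lemma lnln_le_of_le_pow (n m d : nat) : (1 <= d)%nat -> 4 <= INR m -> (n <= m ^ d)%nat ->
  ln (ln (INR n)) <= ln (INR d) + ln (ln (INR m)).
Proof.
  intros Hd Hm Hn. pose proof (ln_gt1 _ Hm). assert (1 <= INR d) by now apply (le_INR 1).
  rewrite <- ln_mult by lra. apply ln_le_of_le; [nra|].
  rewrite <- ln_pow by lra. apply ln_le_of_le.
  - rewrite <- (pow1 d). apply pow_incr. lra.
  - rewrite <- pow_INR. now apply le_INR.
Qed.

Lemma exists_nat_ln_between z : 0 <= z ->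
  exists n : nat, exp z <= INR n /\ z <= ln (INR n) <= z + ln 2.
Proof.
  intros Hz. assert (Hez : 1 <= exp z) by (rewrite <- exp_0; apply exp_monotone; lra).
  destruct (nat_between (exp z)) as [n Hn]; [lra|]. exists n. split; [lra|].
  pose proof (exp_pos z). split.
  - rewrite <- (ln_exp z) at 1. apply ln_le; lra.
  - replace (z + ln 2) with (ln (exp z * 2)) by (rewrite ln_mult, ln_exp; lra).
    apply ln_le; lra.
Qed.

Lemma exp_le_pow_of_gap x A d : 0 < x -> INR d * (1 - x) <= A * x -> exp (- A) <= x ^ d.
Proof.
  intros Hx H. rewrite <- Rpower_pow by lra. apply exp_monotone.
  assert (Hln : 1 - / x <= ln x).
  { pose proof (exp_ineq1_le (ln (/ x))). rewrite exp_ln, ln_Rinv in H0 by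
      (try apply Rinv_0_lt_compat; lra). lra. }
  assert (INR d * (1 - / x) <= INR d * ln x) by (apply Rmult_le_compat_l; [apply pos_INR|lra]).
  assert (INR d * (1 - / x) = - (INR d * (1 - x)) / x) by (field; lra).
  assert (- A <= - (INR d * (1 - x)) / x); [|lra].
  apply Rcomplements.Rle_div_r; lra.
Qed.

Lemma pow_le_exp_of_gap x A d : 0 <= x -> A <= INR d * (1 - x) -> x ^ d <= exp (- A).
Proof.
  intros Hx H. eapply Rle_trans with (exp (- (1 - x)) ^ d).
  - apply pow_incr. pose proof (exp_ineq1_le (- (1 - x))). lra.
  - rewrite <- Rpower_pow by apply exp_pos. unfold Rpower. rewrite ln_exp.
    apply exp_monotone. lra.
Qed.

Lemma ln_sublinear A C B : 0 <= A -> 0 < B ->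
  exists X, forall x, X <= x -> A * ln x + C < B * x.
Proof.
  intros HA HB. set (K := (2 * A + Rabs C + 1) / B).
  assert (HK : 0 < K) by (apply Rdiv_lt_0_compat; [pose proof (Rabs_pos C)|]; lra).
  exists (K * K + 1). intros x Hx. assert (Hx0 : 0 < x) by nra.
  pose proof (sqrt_lt_R0 x Hx0) as Hsq. pose proof (sqrt_sqrt x ltac:(lra)) as Hss.
  (* [ln x = 2 ln (sqrt x) < 2 sqrt x] *)
  assert (Hln : ln x < 2 * sqrt x).
  { rewrite <- Hss at 1. rewrite ln_mult by auto.
    pose proof (exp_ineq1_le (ln (sqrt x))). rewrite exp_ln in H by auto. lra. }
  assert (Hs1 : K <= sqrt x).
  { destruct (Rle_lt_dec K (sqrt x)) as [h|h]; auto.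
    assert (sqrt x * sqrt x < K * K) by (apply Rmult_le_0_lt_compat; lra). lra. }
  assert (B * K = 2 * A + Rabs C + 1) by (unfold K; field; lra).
  assert (B * x = (B * sqrt x) * sqrt x) by (rewrite <- Hss at 1; ring).
  assert (B * sqrt x >= 2 * A + Rabs C + 1) by nra.
  assert (Hs2 : 1 <= sqrt x).
  { destruct (Rle_lt_dec 1 (sqrt x)) as [h|h]; auto.
    assert (sqrt x * sqrt x < 1 * 1) by (apply Rmult_le_0_lt_compat; lra). nra. }
  assert (A * ln x <= A * (2 * sqrt x)) by (apply Rmult_le_compat_l; lra).
  assert ((2 * A + Rabs C + 1) * sqrt x <= B * sqrt x * sqrt x)
    by (apply Rmult_le_compat_r; lra).
  assert (Rabs C * 1 <= Rabs C * sqrt x) by (apply Rmult_le_compat_l; [apply Rabs_pos|lra]).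
  pose proof (Rle_abs C). lra.
Qed.

Lemma Un_cv_ratio_of_bounds (x L : nat -> R) : (forall d, 0 < L d) ->
  (forall dl, 0 < dl -> exists D, forall d, (D <= d)%nat -> x d <= (1 + dl) * L d) ->
  (forall dl, 0 < dl < 1 -> exists D, forall d, (D <= d)%nat -> (1 - dl) * L d <= x d) ->
  Un_cv (fun d => x d / L d) 1.
Proof.
  intros HL Hup Hlo tau Htau. set (dl := Rmin (tau / 2) (1 / 2)).
  assert (Hdl : 0 < dl < 1) by (split; [apply Rmin_glb_lt|eapply Rle_lt_trans; [apply Rmin_r|]]; lra).
  assert (Hdt : dl < tau) by (eapply Rle_lt_trans; [apply Rmin_l|lra]).
  destruct (Hup dl (proj1 Hdl)) as [D1 HD1]. destruct (Hlo dl Hdl) as [D2 HD2].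
  exists (Nat.max D1 D2). intros d Hd. specialize (HD1 d ltac:(lia)).
  specialize (HD2 d ltac:(lia)). specialize (HL d). unfold R_dist.
  replace (x d / L d - 1) with ((x d - L d) / L d) by (field; lra).
  rewrite Rabs_div, (Rabs_pos_eq (L d)) by lra. apply Rcomplements.Rlt_div_l; [lra|].
  apply Rabs_def1; nra.
Qed.

Lemma pow_ge_bernoulli x d : 0 <= x <= 1 -> 1 - INR d * (1 - x) <= x ^ d.
Proof.
  intros Hx. induction d as [|d IH]; [simpl; lra|].
  rewrite S_INR. simpl. assert (0 <= x ^ d) by (apply pow_le; lra).
  assert (x ^ d <= 1) by (rewrite <- (pow1 d); apply pow_incr; lra).
  assert (0 <= INR d) by apply pos_INR. nra.
Qed.

Section NormalizedSpectrum.
Variables (lam : nat -> R) (Lam : R).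
Hypotheses (Hnonneg : forall k, (1 <= k)%nat -> 0 <= lam k)
  (Hdec : forall k, (1 <= k)%nat -> lam (S k) <= lam k)
  (Hpos1 : 0 < lam 1%nat)
  (HLam : infinite_sum (fun k => lam (S k)) Lam).

Local Notation p k := (lam k / Lam).
Local Notation mass := (head_sum (fun k => lam k / Lam)).

Lemma Lam_pos : 0 < Lam.
Proof.
  assert (lam 1%nat <= Lam); [|lra].
  apply (sum_incr (fun k => lam (S k)) 0 Lam HLam). intros n; apply Hnonneg; lia.
Qed.

Lemma p_nonneg k : (1 <= k)%nat -> 0 <= p k.
Proof.
  intros Hk. pose proof Lam_pos.
  apply Rmult_le_pos; [now apply Hnonneg|left; now apply Rinv_0_lt_compat].
Qed.

Lemma p_antitone a b : (1 <= a <= b)%nat -> p b <= p a.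
Proof.
  pose proof Lam_pos. intros [Ha Hab]. induction Hab as [|b Hab IH]; [lra|].
  eapply Rle_trans; [|exact IH]. apply Rmult_le_compat_r.
  - left; now apply Rinv_0_lt_compat.
  - apply Hdec; lia.
Qed.

Lemma mass_eq_partial_sum n : mass (S n) = sum_f_R0 (fun k => lam (S k)) n / Lam.
Proof.
  unfold head_sum. change (fun k => lam (S k)) with (fun j => lam (1 + j)%nat).
  rewrite sum_f_R0_shift. unfold Rdiv. rewrite Rmult_comm, <- sumL_scal.
  apply sumL_ext. intros; lra.
Qed.

Lemma mass_le1 m : mass m <= 1.
Proof.
  pose proof Lam_pos. destruct m as [|m]; [unfold head_sum; simpl; lra|].
  rewrite mass_eq_partial_sum. apply Rcomplements.Rle_div_l; [lra|]. rewrite Rmult_1_l.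
  apply (sum_incr (fun k => lam (S k)) m Lam HLam). intros n; apply Hnonneg; lia.
Qed.

Lemma mass_nonneg m : 0 <= mass m.
Proof. apply sumL_nonneg. intros k Hk. apply in_seq in Hk. apply p_nonneg; lia. Qed.

Lemma mass_cv e : 0 < e -> exists m0, forall m, (m0 <= m)%nat -> 1 - e < mass m.
Proof.
  intros He. pose proof Lam_pos. destruct (HLam (e * Lam)) as [K HK]; [nra|].
  exists (S K). intros [|m] Hm; [lia|]. rewrite mass_eq_partial_sum.
  specialize (HK m ltac:(lia)). unfold R_dist in HK. apply Rabs_def2 in HK.
  apply Rcomplements.Rlt_div_r; lra.
Qed.

(* Monotonicity and [mass m <= 1] give [m * p m <= 1]. *)
Lemma p_le_inv m : (1 <= m)%nat -> p m <= / INR m.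
Proof.
  intros Hm. assert (Hm0 : 0 < INR m) by (apply lt_0_INR; lia).
  assert (INR m * p m <= 1).
  { eapply Rle_trans; [|apply (mass_le1 m)]. unfold head_sum.
    rewrite <- (length_seq m 1) at 1. rewrite <- sumL_const. apply sumL_le.
    intros x Hx. apply in_seq in Hx. apply p_antitone. lia. }
  apply (Rmult_le_reg_l (INR m)); auto. rewrite Rinv_r; lra.
Qed.

Lemma p_le1 k : (1 <= k)%nat -> p k <= 1.
Proof.
  intros Hk. eapply Rle_trans; [now apply p_le_inv|].
  rewrite <- Rinv_1. apply Rinv_le_contravar; [lra|]. now apply (le_INR 1).
Qed.

Lemma tensor_eig_nonneg t : Forall (fun k => 1 <= k)%nat t -> 0 <= tensor_eig lam Lam t.
Proof.
  induction t as [|k t IH]; intros H; simpl; [lra|].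
  inversion H; subst. apply Rmult_le_pos; auto. now apply p_nonneg.
Qed.

Lemma tensor_eig_le1 t : Forall (fun k => 1 <= k)%nat t -> tensor_eig lam Lam t <= 1.
Proof.
  induction t as [|k t IH]; intros H; simpl; [lra|]. inversion H; subst.
  pose proof (tensor_eig_nonneg t ltac:(auto)). pose proof (p_nonneg k ltac:(auto)).
  pose proof (p_le1 k ltac:(auto)). assert (tensor_eig lam Lam t <= 1) by auto. nra.
Qed.

Lemma tensor_eig_in_box_or_le M t : Forall (fun k => 1 <= k)%nat t ->
  Forall (fun k => k <= M)%nat t \/ tensor_eig lam Lam t <= p (S M).
Proof.
  induction t as [|k t IH]; intros H; [left; constructor|]. inversion H; subst. simpl.
  pose proof (tensor_eig_nonneg t ltac:(auto)). pose proof (tensor_eig_le1 t ltac:(auto)).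
  pose proof (p_nonneg k ltac:(auto)). pose proof (p_le1 k ltac:(auto)).
  destruct (Compare_dec.le_lt_dec k M) as [HkM|HMk].
  - destruct (IH ltac:(auto)) as [HF|HB]; [left; now constructor|right; nra].
  - right. assert (p k <= p (S M)) by (apply p_antitone; lia).
    assert (0 <= p (S M)) by (apply p_nonneg; lia). nra.
Qed.

Section SortedEnumeration.
Variables (d : nat) (mu : nat -> R) (sigma : nat -> list nat).
Hypotheses (Hsigma_valid : forall k, (1 <= k)%nat -> valid_index d (sigma k))
  (Hsigma_inj : forall k l, (1 <= k)%nat -> (1 <= l)%nat -> sigma k = sigma l -> k = l)
  (Hsigma_onto : forall t, valid_index d t -> exists k, (1 <= k)%nat /\ sigma k = t)
  (Hmu : forall k, (1 <= k)%nat -> mu k = tensor_eig lam Lam (sigma k))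
  (Hmu_dec : forall k, (1 <= k)%nat -> mu (S k) <= mu k).

Lemma mu_nonneg k : (1 <= k)%nat -> 0 <= mu k.
Proof. intros Hk. rewrite Hmu by auto. apply tensor_eig_nonneg, Hsigma_valid, Hk. Qed.

Lemma mu_antitone a b : (1 <= a <= b)%nat -> mu b <= mu a.
Proof.
  intros [Ha Hab]. induction Hab as [|b Hab IH]; [lra|].
  eapply Rle_trans; [apply Hmu_dec; lia|exact IH].
Qed.

Lemma sumL_mu_eq J : Forall (fun k => 1 <= k)%nat J ->
  sumL mu J = sumL (tensor_eig lam Lam) (map sigma J).
Proof.
  intros HJ. rewrite sumL_map. apply sumL_ext. rewrite Forall_forall in HJ. auto.
Qed.

Lemma NoDup_map_sigma J : NoDup J -> Forall (fun k => 1 <= k)%nat J -> NoDup (map sigma J).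
Proof.
  intros HN HJ. apply NoDup_map_NoDup_ForallPairs; auto. rewrite Forall_forall in HJ.
  intros x y Hx Hy. apply Hsigma_inj; auto.
Qed.

Lemma sigma_preimage B : NoDup B -> (forall t, In t B -> valid_index d t) ->
  exists J, NoDup J /\ Forall (fun k => 1 <= k)%nat J /\ map sigma J = B.
Proof.
  induction B as [|b B IH]; intros HN HB; [exists []; repeat constructor|].
  inversion HN as [|? ? HbB HN']; subst.
  destruct IH as [J [HJ [HJ1 HJB]]]; auto; [intros; apply HB; now right|].
  destruct (Hsigma_onto b) as [k [Hk Hkb]]; [apply HB; now left|].
  exists (k :: J). repeat split; [|constructor; auto|simpl; congruence].
  constructor; auto. intros HkJ. apply HbB. rewrite <- HJB, <- Hkb. now apply in_map.
Qed.

Lemma head_sum_mu_le1 n : head_sum mu n <= 1.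
Proof.
  assert (Hseq : Forall (fun k => 1 <= k)%nat (seq 1 n))
    by (apply Forall_forall; intros k Hk; apply in_seq in Hk; lia).
  unfold head_sum. rewrite sumL_mu_eq by auto.
  destruct (box_incl_of_valid d (map sigma (seq 1 n))) as [m Hm].
  { intros t Ht. apply in_map_iff in Ht. destruct Ht as [k [<- Hk]].
    apply in_seq in Hk. apply Hsigma_valid; lia. }
  eapply Rle_trans; [apply sumL_incl_le; eauto|].
  - apply NoDup_map_sigma; auto. apply seq_NoDup.
  - intros t Ht. apply tensor_eig_nonneg. now apply (valid_index_of_box d m).
  - rewrite sum_tensor_eig_box, <- (pow1 d). apply pow_incr.
    split; [apply mass_nonneg|apply mass_le1].
Qed.

Lemma sumL_mu_le_head_sum n : forall J, NoDup J -> Forall (fun k => 1 <= k)%nat J ->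
  length J = n -> sumL mu J <= head_sum mu n.
Proof.
  induction n as [|n IH]; intros J HJ HF Hl.
  - destruct J; [unfold head_sum; simpl; lra|discriminate].
  - assert (Hex : exists j, In j J /\ (S n <= j)%nat).
    { destruct (Forall_dec (fun k => k <= n)%nat (fun k => Compare_dec.le_dec k n) J)
        as [Hle|Hn].
      - exfalso. assert (incl J (seq 1 n)).
        { intros x Hx. rewrite Forall_forall in *. apply in_seq.
          specialize (Hle x Hx). specialize (HF x Hx). lia. }
        pose proof (NoDup_incl_length HJ H). rewrite length_seq in *. lia.
      - apply neg_Forall_Exists_neg in Hn; [|intros x; apply Compare_dec.le_dec].
        apply Exists_exists in Hn. destruct Hn as [j [Hj1 Hj2]]. exists j; split; auto; lia. }
    destruct Hex as [j [Hj Hjn]]. destruct (in_split _ _ Hj) as [l1 [l2 ->]].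
    assert (sumL mu (l1 ++ l2) <= head_sum mu n).
    { apply IH.
      - eapply NoDup_remove_1; eauto.
      - rewrite Forall_forall in *. intros x Hx. apply HF.
        apply in_app_or in Hx; apply in_or_app; simpl; tauto.
      - rewrite length_app in *. simpl in Hl. lia. }
    assert (mu j <= mu (S n)) by (apply mu_antitone; lia).
    rewrite head_sum_S. rewrite sumL_app in *. simpl. lra.
Qed.

Lemma mass_pow_le_head_sum_mu m : mass m ^ d <= head_sum mu (m ^ d).
Proof.
  destruct (sigma_preimage (box d m)) as [J [HJ [HJ1 HJB]]].
  - apply NoDup_box.
  - apply valid_index_of_box.
  - rewrite <- sum_tensor_eig_box, <- HJB, <- sumL_mu_eq by auto.
    apply sumL_mu_le_head_sum; auto. now rewrite <- (length_map sigma), HJB, length_box.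
Qed.

Lemma head_sum_mu_cv e : 0 < e -> exists K, forall n, (K <= n)%nat -> 1 - e < head_sum mu n.
Proof.
  intros He. assert (Hd : 0 < INR d + 1) by (pose proof (pos_INR d); lra).
  destruct (mass_cv (e / (INR d + 1))) as [m Hm]; [apply Rdiv_lt_0_compat; lra|].
  specialize (Hm m (le_n m)). exists (m ^ d)%nat. intros n Hn.
  assert (Hmono : head_sum mu (m ^ d) <= head_sum mu n).
  { replace n with (m ^ d + (n - m ^ d))%nat by lia. rewrite head_sum_add.
    assert (0 <= sumL mu (seq (S (m ^ d)) (n - m ^ d))); [|lra].
    apply sumL_nonneg. intros x Hx; apply in_seq in Hx; apply mu_nonneg; lia. }
  pose proof (mass_pow_le_head_sum_mu m).
  pose proof (pow_ge_bernoulli (mass m) d (conj (mass_nonneg m) (mass_le1 m))).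
  assert (INR d * (1 - mass m) < e); [|lra].
  assert (Hq : 0 < e / (INR d + 1)) by (apply Rdiv_lt_0_compat; lra).
  assert (Hqe : e / (INR d + 1) * (INR d + 1) = e) by (field; lra).
  assert (INR d * (1 - mass m) <= INR d * (e / (INR d + 1)))
    by (apply Rmult_le_compat_l; [apply pos_INR|lra]).
  lra.
Qed.

Lemma tail_series n : infinite_sum (fun j => mu (n + 1 + j)%nat) (1 - head_sum mu n).
Proof.
  intros e He. destruct (head_sum_mu_cv e He) as [K HK]. exists K. intros k Hk.
  rewrite sum_f_R0_shift. unfold R_dist.
  replace (sumL mu (seq (n + 1) (S k))) with (head_sum mu (n + S k) - head_sum mu n)
    by (rewrite head_sum_add, Nat.add_1_r; ring).
  pose proof (HK (n + S k)%nat ltac:(lia)). pose proof (head_sum_mu_le1 (n + S k)).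
  apply Rabs_def1; lra.
Qed.

Lemma tail_le_iff n eps : tail_le mu n eps <-> 1 - eps ^ 2 <= head_sum mu n.
Proof.
  split.
  - intros [T [HT HTe]]. rewrite (uniqueness_sum _ _ _ HT (tail_series n)) in HTe. lra.
  - intros H. exists (1 - head_sum mu n). split; [apply tail_series|lra].
Qed.

(* The terms of index [<= n] whose multi-index leaves the box [{1..M}^d] are each [<= p (M+1)]. *)
Lemma head_sum_mu_le_mass M n : head_sum mu n <= mass M ^ d + INR n * p (S M).
Proof.
  set (inbox := fun k => if in_dec (list_eq_dec Nat.eq_dec) (sigma k) (box d M)
                          then true else false).
  assert (Hin : forall x, In x (seq 1 n) -> (1 <= x)%nat)
    by (intros x Hx; apply in_seq in Hx; lia).
  unfold head_sum at 1. rewrite (sumL_filter mu inbox).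
  assert (H1 : sumL mu (filter inbox (seq 1 n)) <= mass M ^ d).
  { rewrite <- sum_tensor_eig_box, sumL_mu_eq.
    2:{ apply Forall_forall. intros x Hx. apply filter_In in Hx. apply Hin; tauto. }
    apply sumL_incl_le.
    - apply NoDup_map_sigma; [apply NoDup_filter, seq_NoDup|].
      apply Forall_forall. intros x Hx. apply filter_In in Hx. apply Hin; tauto.
    - intros t Ht. apply in_map_iff in Ht. destruct Ht as [k [<- Hk]].
      apply filter_In in Hk. destruct Hk as [_ Hk]. unfold inbox in Hk.
      destruct in_dec; [auto|discriminate].
    - intros t Ht. apply tensor_eig_nonneg. now apply (valid_index_of_box d M). }
  assert (H2 : sumL mu (filter (fun x => negb (inbox x)) (seq 1 n))
               <= INR n * p (S M)).
  { eapply Rle_trans.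
    - apply (sumL_le _ (fun _ => p (S M))). intros k Hk. apply filter_In in Hk.
      destruct Hk as [Hk Hout]. rewrite Hmu by auto.
      destruct (Hsigma_valid k (Hin k Hk)) as [Hl Hvk].
      destruct (tensor_eig_in_box_or_le M (sigma k) Hvk) as [HF|HB]; auto.
      exfalso. unfold inbox in Hout. destruct in_dec as [_|Hn]; [discriminate|].
      apply Hn, In_box. split; auto. rewrite Forall_forall in *. intros x Hx. split; auto.
    - rewrite sumL_const. apply Rmult_le_compat_r; [apply p_nonneg; lia|].
      apply le_INR. rewrite <- (length_seq n 1) at 2. apply filter_length_le. }
  lra.
Qed.

End SortedEnumeration.

Lemma nX_le_pow d eps N m : is_nX lam Lam d eps N -> 1 - eps ^ 2 <= mass m ^ d -> (N <= m ^ d)%nat.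
Proof.
  intros [mu [[sigma [Hv [Hi [Ho [Hm Hd]]]]] [_ Hmin]]] H. apply Hmin.
  apply (tail_le_iff d mu sigma); auto.
  eapply Rle_trans; [exact H|]. now apply (mass_pow_le_head_sum_mu d mu sigma).
Qed.

Lemma nX_lower d eps N M : is_nX lam Lam d eps N ->
  1 - eps ^ 2 <= mass M ^ d + INR N * p (S M).
Proof.
  intros [mu [[sigma [Hv [Hi [Ho [Hm Hd]]]]] [Ht _]]].
  apply (tail_le_iff d mu sigma) in Ht; auto.
  eapply Rle_trans; [exact Ht|]. now apply (head_sum_mu_le_mass d mu sigma).
Qed.

Section LoglogTail.
Variables (beta s : R).
Hypotheses (Hbeta : 0 < beta) (Hs : 0 < s)
  (Hasym : Un_cv (fun k => (lam k / Lam) /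
             (beta / (INR k * ln (INR k) * Rpower (ln (ln (INR k))) (1 + s)))) 1).

Lemma p_asymptotic eta : 0 < eta -> exists K, (4 <= K)%nat /\ forall k, (K <= k)%nat ->
  (1 - eta) * beta * loglog_weight s (INR k) <= p k <= (1 + eta) * beta * loglog_weight s (INR k).
Proof.
  intros He. destruct (Hasym eta He) as [K HK]. exists (Nat.max K 4). split; [lia|].
  intros k Hk. specialize (HK k ltac:(lia)). unfold R_dist in HK. apply Rabs_def2 in HK.
  set (q := beta * loglog_weight s (INR k)).
  assert (Hq : 0 < q)
    by (apply Rmult_lt_0_compat; [lra|apply loglog_weight_pos, INR_ge4; lia]).
  change (beta / (INR k * ln (INR k) * Rpower (ln (ln (INR k))) (1 + s))) with q in HK.
  rewrite !Rmult_assoc. fold q.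
  pose proof Lam_pos. replace (p k) with (p k / q * q) by (field; lra).
  destruct HK. split; nra.
Qed.

Lemma mass_tail_upper eta : 0 < eta -> exists K, (4 <= K)%nat /\ forall m, (K <= m)%nat ->
  1 - mass m <= (1 + eta) * beta * loglog_tail s (INR m).
Proof.
  intros He. destruct (p_asymptotic eta He) as [K [HK4 HK]]. exists K; split; auto.
  intros m Hm. set (C := (1 + eta) * beta). assert (HC : 0 < C) by (unfold C; nra).
  assert (Htel := head_sum_telescope_le (fun k => lam k / Lam)
                    (fun k => C * loglog_tail s (INR k)) m).
  apply Rle_plus_epsilon. intros e He'. destruct (mass_cv e He') as [j Hj].
  specialize (Hj (m + j)%nat ltac:(lia)).
  assert (mass (m + j) - mass m <= C * loglog_tail s (INR m) - C * loglog_tail s (INR (m + j))).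
  { apply Htel. intros k Hk. rewrite S_INR.
    destruct (loglog_weight_le_tail_diff s (INR k) Hs ltac:(apply INR_ge4; lia)) as [Hw _].
    destruct (HK (S k) ltac:(lia)) as [_ Hp]. rewrite S_INR in Hp. fold C in Hp. nra. }
  assert (0 < C * loglog_tail s (INR (m + j)))
    by (apply Rmult_lt_0_compat; [lra|now apply loglog_tail_pos]).
  lra.
Qed.

Lemma mass_tail_lower eta : 0 < eta < 1 -> exists K, (4 <= K)%nat /\ forall m, (K <= m)%nat ->
  (1 - eta) * beta * loglog_tail s (INR (S m)) <= 1 - mass m.
Proof.
  intros He. destruct (p_asymptotic eta ltac:(lra)) as [K [HK4 HK]]. exists K; split; auto.
  intros m Hm. set (C := (1 - eta) * beta). assert (HC : 0 < C) by (unfold C; nra).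
  assert (Htel := head_sum_telescope_ge (fun k => lam k / Lam)
                    (fun k => C * loglog_tail s (INR (S k))) m).
  apply Rle_plus_epsilon. intros e He'.
  destruct (loglog_tail_vanishes s (e / C) Hs) as [X HX]; [now apply Rdiv_lt_0_compat|].
  destruct (nat_above X) as [j Hj].
  assert (C * loglog_tail s (INR (S m)) - C * loglog_tail s (INR (S (m + j)))
          <= mass (m + j) - mass m).
  { apply Htel. intros k Hk. rewrite (S_INR (S k)).
    destruct (loglog_weight_le_tail_diff s (INR (S k)) Hs ltac:(apply INR_ge4; lia))
      as [_ Hw].
    destruct (HK (S k) ltac:(lia)) as [Hp _]. fold C in Hp. nra. }
  assert (C * loglog_tail s (INR (S (m + j))) <= e).
  { replace e with (C * (e / C)) by (field; lra). apply Rmult_le_compat_l; [lra|].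
    apply HX. eapply Rle_trans; [exact Hj|]. apply le_INR; lia. }
  pose proof (mass_le1 (m + j)). lra.
Qed.

Section Asymptotics.
Variables (eps : R) (N : nat -> nat).
Hypotheses (Heps : 0 < eps < 1) (HN : forall d, (1 <= d)%nat -> is_nX lam Lam d eps (N d)).

Let a := - ln (1 - eps ^ 2).
Let c := beta / (s * a).
Let L (d : nat) := Rpower (beta * INR d / (s * Rabs (ln (1 - eps ^ 2)))) (1 / s).

Lemma ln_one_minus_eps2_neg : ln (1 - eps ^ 2) < 0.
Proof. rewrite <- ln_1. apply ln_increasing; simpl; nra. Qed.

Lemma a_pos : 0 < a.
Proof. pose proof ln_one_minus_eps2_neg. unfold a. lra. Qed.

Lemma exp_neg_a : exp (- a) = 1 - eps ^ 2.
Proof. unfold a. rewrite Ropp_involutive, exp_ln; [reflexivity|simpl; nra]. Qed.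

Lemma c_pos : 0 < c.
Proof. pose proof a_pos. unfold c. apply Rdiv_lt_0_compat; nra. Qed.

Lemma L_pos d : 0 < L d.
Proof. apply exp_pos. Qed.

Lemma L_pow d : (1 <= d)%nat -> Rpower (L d) s = c * INR d.
Proof.
  intros Hd. pose proof a_pos. assert (0 < INR d) by (apply lt_0_INR; lia).
  unfold L. rewrite Rabs_left by apply ln_one_minus_eps2_neg. fold a.
  rewrite Rpower_mult. replace (1 / s * s) with 1 by (field; lra).
  rewrite Rpower_1; [unfold c; field; lra|]. apply Rdiv_lt_0_compat; nra.
Qed.

Lemma Rpower_scale_L r d : 0 < r -> (1 <= d)%nat ->
  Rpower (r * L d) s = Rpower r s * (c * INR d).
Proof. intros Hr Hd. rewrite <- Rpower_mult_distr, L_pow; auto. apply L_pos. Qed.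

Lemma L_unbounded X : exists D, (1 <= D)%nat /\ forall d, (D <= d)%nat -> X <= L d.
Proof.
  pose proof c_pos. destruct (nat_above (Rpower (Rmax X 1) s / c)) as [D HD].
  exists (S D). split; [lia|]. intros d Hd.
  assert (Rpower (Rmax X 1) s <= Rpower (L d) s).
  { rewrite L_pow by lia. assert (INR D <= INR d) by (apply le_INR; lia).
    apply Rcomplements.Rle_div_l in HD; [nra|lra]. }
  assert (HX1 : 0 < Rmax X 1) by (eapply Rlt_le_trans; [|apply Rmax_r]; lra).
  pose proof (L_pos d).
  assert (Hinv : forall x, 0 < x -> Rpower (Rpower x s) (/ s) = x)
    by (intros x Hx; rewrite Rpower_mult, Rinv_r, Rpower_1; lra).
  apply Rle_trans with (Rmax X 1); [apply Rmax_l|].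
  rewrite <- (Hinv (Rmax X 1)), <- (Hinv (L d)) by assumption.
  apply Rle_Rpower_l; [left; apply Rinv_0_lt_compat; lra|].
  split; [apply exp_pos|assumption].
Qed.

Lemma ln_INR_eq d : (1 <= d)%nat -> ln (INR d) = s * ln (L d) - ln c.
Proof.
  intros Hd. pose proof c_pos. pose proof (L_pos d).
  replace (INR d) with (Rpower (L d) s / c) by (rewrite L_pow by auto; field; lra).
  rewrite ln_div, ln_Rpower; [reflexivity|apply exp_pos|assumption].
Qed.

(* [c = beta / (s a)] is chosen so that [beta * loglog_tail s x] is [a / (th d)] when [(ln ln x)^s = th c d]. *)
Lemma beta_tail_le x th d : (1 <= d)%nat -> 0 < th ->
  th * (c * INR d) <= Rpower (ln (ln x)) s -> beta * loglog_tail s x * INR d <= a / th.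
Proof.
  intros Hd Hth H. pose proof a_pos. pose proof c_pos. assert (0 < INR d) by (apply lt_0_INR; lia).
  replace (a / th) with (beta * / (s * (th * (c * INR d))) * INR d)
    by (unfold c; field; repeat split; nra).
  apply Rmult_le_compat_r; [lra|]. apply Rmult_le_compat_l; [lra|].
  apply Rinv_le_contravar.
  { apply Rmult_lt_0_compat; [lra|]. apply Rmult_lt_0_compat; [lra|].
    apply Rmult_lt_0_compat; lra. }
  apply Rmult_le_compat_l; lra.
Qed.

Lemma beta_tail_ge x ph d : (1 <= d)%nat -> 0 < ph ->
  Rpower (ln (ln x)) s <= ph * (c * INR d) -> a / ph <= beta * loglog_tail s x * INR d.
Proof.
  intros Hd Hph H. pose proof a_pos. pose proof c_pos. assert (0 < INR d) by (apply lt_0_INR; lia).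
  replace (a / ph) with (beta * / (s * (ph * (c * INR d))) * INR d)
    by (unfold c; field; repeat split; nra).
  apply Rmult_le_compat_r; [lra|]. apply Rmult_le_compat_l; [lra|].
  apply Rinv_le_contravar; [apply Rmult_lt_0_compat; [lra|apply exp_pos]|].
  apply Rmult_le_compat_l; lra.
Qed.

Lemma Rpower_gt1 x y : 1 < x -> 0 < y -> 1 < Rpower x y.
Proof.
  intros Hx Hy. unfold Rpower. rewrite <- exp_0. apply exp_increasing.
  assert (0 < ln x) by (rewrite <- ln_1; apply ln_increasing; lra). nra.
Qed.

Lemma Rpower_lt1 x y : 0 < x < 1 -> 0 < y -> Rpower x y < 1.
Proof.
  intros Hx Hy. unfold Rpower. rewrite <- exp_0. apply exp_increasing.
  assert (ln x < 0) by (rewrite <- ln_1; apply ln_increasing; lra). nra.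
Qed.

Lemma mass_pow_ge th : 1 < th -> exists K, (4 <= K)%nat /\ forall m d, (K <= m)%nat ->
  (1 <= d)%nat -> th * (c * INR d) <= Rpower (ln (ln (INR m))) s -> 1 - eps ^ 2 <= mass m ^ d.
Proof.
  intros Hth. pose proof a_pos as Ha. set (eta := Rmin (1 / 2) ((th - 1) / 3)).
  assert (He : 0 < eta) by (apply Rmin_glb_lt; lra).
  assert (Heta : (1 + eta) * (1 + eta) <= th).
  { assert (eta <= 1 / 2) by apply Rmin_l. assert (eta <= (th - 1) / 3) by apply Rmin_r. nra. }
  destruct (mass_tail_upper eta He) as [K1 [HK1 HT]].
  destruct (mass_cv (eta / (1 + eta))) as [m0 Hm0]; [apply Rdiv_lt_0_compat; lra|].
  exists (Nat.max K1 m0). split; [lia|]. intros m d Hm Hd H.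
  assert (Hmass : 1 < (1 + eta) * mass m).
  { specialize (Hm0 m ltac:(lia)).
    assert (eta / (1 + eta) * (1 + eta) = eta) by (field; lra). nra. }
  assert (Hgap : INR d * (1 - mass m) <= (1 + eta) * (a / th)).
  { pose proof (beta_tail_le (INR m) th d Hd ltac:(lra) H).
    assert (INR d * (1 - mass m) <= INR d * ((1 + eta) * beta * loglog_tail s (INR m)))
      by (apply Rmult_le_compat_l; [apply pos_INR|apply HT; lia]).
    assert ((1 + eta) * (beta * loglog_tail s (INR m) * INR d) <= (1 + eta) * (a / th))
      by (apply Rmult_le_compat_l; lra).
    lra. }
  assert (Hath : (1 + eta) * (1 + eta) * (a / th) <= a).
  { assert (a / th * th = a) by (field; lra). assert (0 < a / th) by (apply Rdiv_lt_0_compat; lra).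
    nra. }
  rewrite <- exp_neg_a. apply exp_le_pow_of_gap; [nra|].
  eapply Rle_trans; [exact Hgap|]. nra.
Qed.

Lemma mass_pow_le ph : 0 < ph < 1 -> exists ga K, 1 < ga /\ (4 <= K)%nat /\
  forall M d, (K <= M)%nat -> (1 <= d)%nat ->
  Rpower (ln (ln (INR (S M)))) s <= ph * (c * INR d) -> mass M ^ d <= exp (- (ga * a)).
Proof.
  intros Hph. pose proof a_pos as Ha. set (eta := (1 - ph) / 2).
  destruct (mass_tail_lower eta ltac:(unfold eta; lra)) as [K [HK HT]].
  exists ((1 - eta) / ph), K. split; [|split; [exact HK|]].
  { apply Rcomplements.Rlt_div_r; unfold eta; lra. }
  intros M d HM Hd H. apply pow_le_exp_of_gap; [apply mass_nonneg|].
  pose proof (beta_tail_ge (INR (S M)) ph d Hd ltac:(lra) H).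
  assert ((1 - eta) * (a / ph) <= (1 - eta) * (beta * loglog_tail s (INR (S M)) * INR d))
    by (apply Rmult_le_compat_l; unfold eta; lra).
  assert ((1 - eta) * beta * loglog_tail s (INR (S M)) * INR d <= (1 - mass M) * INR d)
    by (apply Rmult_le_compat_r; [apply pos_INR|now apply HT]).
  replace ((1 - eta) / ph * a) with ((1 - eta) * (a / ph)) by (field; lra). lra.
Qed.

Lemma nX_ge_of_mass d M b : (1 <= d)%nat -> mass M ^ d <= b ->
  (1 - eps ^ 2 - b) * INR (S M) <= INR (N d).
Proof.
  intros Hd Hb. pose proof (nX_lower d eps (N d) M (HN d Hd)).
  pose proof (p_le_inv (S M) ltac:(lia)). pose proof (pos_INR (N d)).
  assert (HSM : 0 < INR (S M)) by apply lt_0_INR, Nat.lt_0_succ.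
  assert (INR (N d) * p (S M) <= INR (N d) * / INR (S M)) by (apply Rmult_le_compat_l; lra).
  apply Rle_trans with (INR (N d) * / INR (S M) * INR (S M)).
  - apply Rmult_le_compat_r; lra.
  - right. field. lra.
Qed.

Lemma lnln_nX_upper_of_L dl : 0 < dl -> exists X, forall d, (1 <= d)%nat -> X <= L d ->
  ln (ln (INR (N d))) <= ln (INR d) + ln 2 + (1 + dl) * L d.
Proof.
  intros Hdl. destruct (mass_pow_ge (Rpower (1 + dl) s)) as [K [HK4 HK]];
    [apply Rpower_gt1; lra|].
  exists (INR K). intros d Hd HL. pose proof (L_pos d).
  set (y := (1 + dl) * L d). assert (Hy : L d <= y) by (unfold y; nra).
  destruct (exists_nat_ln_between (exp y)) as [m [Hm [Hlm Hlm']]]; [pose proof (exp_pos y); lra|].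
  assert (HmK : INR K <= INR m).
  { pose proof (exp_gt_id y). pose proof (exp_gt_id (exp y)). lra. }
  assert (Hm4 : 4 <= INR m) by (pose proof (INR_ge4 K HK4); lra).
  assert (Hlnlnm : y <= ln (ln (INR m))).
  { rewrite <- (ln_exp y) at 1. apply ln_le; [apply exp_pos|lra]. }
  assert (Hmass : 1 - eps ^ 2 <= mass m ^ d).
  { apply (HK m d); auto; [apply INR_le; lra|]. unfold y in Hlnlnm.
    rewrite <- Rpower_scale_L by (auto; lra).
    apply Rle_Rpower_l; [lra|]. split; [nra|exact Hlnlnm]. }
  pose proof (lnln_le_of_le_pow (N d) m d Hd Hm4 (nX_le_pow d eps (N d) m (HN d Hd) Hmass)).
  assert (ln (ln (INR m)) <= ln 2 + y); [|lra].
  pose proof (exp_ineq1_le y). pose proof ln2_lt1.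
  replace (ln 2 + y) with (ln (2 * exp y)) by (rewrite ln_mult, ln_exp; lra).
  apply ln_le; lra.
Qed.

Lemma lnln_nX_lower_of_L dl : 0 < dl < 1 -> exists X, forall d, (1 <= d)%nat -> X <= L d ->
  (1 - dl) * L d - ln 2 <= ln (ln (INR (N d))).
Proof.
  intros Hdl. pose proof a_pos as Ha. pose proof ln2_lt1.
  destruct (mass_pow_le (Rpower (1 - dl) s)) as [ga [K [Hga [HK4 HK]]]].
  { split; [apply exp_pos|apply Rpower_lt1; lra]. }
  set (ka := 1 - eps ^ 2 - exp (- (ga * a))).
  assert (Hka : 0 < ka).
  { unfold ka. rewrite <- exp_neg_a.
    assert (exp (- (ga * a)) < exp (- a)) by (apply exp_increasing; nra). lra. }
  set (Y := Rmax (INR K + 1) (2 * (ln 2 - ln ka))).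
  exists (Y / (1 - dl)). intros d Hd HL. pose proof (L_pos d).
  set (y := (1 - dl) * L d).
  assert (HY : INR K + 1 <= y /\ 2 * (ln 2 - ln ka) <= y).
  { apply Rcomplements.Rle_div_l in HL; [|lra].
    assert (INR K + 1 <= Y) by apply Rmax_l. assert (2 * (ln 2 - ln ka) <= Y) by apply Rmax_r.
    unfold y; lra. }
  pose proof (exp_gt_id y). pose proof (exp_ineq1_le y).
  destruct (exists_nat_ln_between (exp y - ln 2)) as [n [Hn [Hln Hln']]];
    [pose proof (pos_INR K); lra|].
  assert (Hny : y < INR n) by (pose proof (exp_ineq1_le (exp y - ln 2)); lra).
  assert (HnK : (K + 1 < n)%nat) by (apply INR_lt; rewrite plus_INR; simpl; lra).
  destruct n as [|M]; [lia|].
  assert (Hlnln : ln (ln (INR (S M))) <= y).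
  { rewrite <- (ln_exp y) at 1. apply ln_le; [pose proof (pos_INR K)|]; lra. }
  assert (Hmass : mass M ^ d <= exp (- (ga * a))).
  { apply (HK M d); [lia|exact Hd|].
    rewrite <- Rpower_scale_L by (auto; lra). fold y.
    apply Rle_Rpower_l; [lra|]. split; [|exact Hlnln].
    apply lnln_pos, INR_ge4. lia. }
  pose proof (nX_ge_of_mass d M _ Hd Hmass) as HNd. fold ka in HNd.
  assert (HlnN : exp y - (ln 2 - ln ka) <= ln (INR (N d))).
  { assert (0 < INR (S M)) by (apply lt_0_INR; lia).
    assert (ln (ka * INR (S M)) <= ln (INR (N d))) by (apply ln_le; [nra|exact HNd]).
    rewrite ln_mult in * by lra. lra. }
  assert (ln (exp y / 2) <= ln (ln (INR (N d))))
    by (apply ln_le; [pose proof (exp_pos y)|]; lra).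
  rewrite ln_div, ln_exp in * by (try apply exp_pos; lra). unfold y in *. lra.
Qed.

Lemma lnln_nX_upper dl : 0 < dl ->
  exists D, forall d, (D <= d)%nat -> ln (ln (INR (N d))) <= (1 + dl) * L d.
Proof.
  intros Hdl. destruct (lnln_nX_upper_of_L (dl / 2)) as [X1 H1]; [lra|].
  destruct (ln_sublinear s (ln 2 - ln c) (dl / 2)) as [X2 H2]; [lra|lra|].
  destruct (L_unbounded (Rmax X1 X2)) as [D [HD1 HD]]. exists D. intros d Hd.
  specialize (HD d Hd). pose proof (Rmax_l X1 X2). pose proof (Rmax_r X1 X2).
  specialize (H1 d ltac:(lia) ltac:(lra)). specialize (H2 (L d) ltac:(lra)).
  rewrite (ln_INR_eq d) in H1 by lia. lra.
Qed.

Lemma lnln_nX_lower dl : 0 < dl < 1 ->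
  exists D, forall d, (D <= d)%nat -> (1 - dl) * L d <= ln (ln (INR (N d))).
Proof.
  intros Hdl. destruct (lnln_nX_lower_of_L (dl / 2)) as [X1 H1]; [lra|].
  destruct (L_unbounded (Rmax X1 (2 / dl))) as [D [HD1 HD]]. exists D. intros d Hd.
  specialize (HD d Hd). pose proof (Rmax_l X1 (2 / dl)). pose proof (Rmax_r X1 (2 / dl)).
  specialize (H1 d ltac:(lia) ltac:(lra)).
  assert (dl / 2 * (2 / dl) = 1) by (field; lra).
  assert (dl / 2 * (2 / dl) <= dl / 2 * L d) by (apply Rmult_le_compat_l; lra).
  pose proof ln2_lt1. lra.
Qed.

End Asymptotics.
End LoglogTail.
End NormalizedSpectrum.

Theorem proposition11
  (lam : nat -> R) (Lam beta s eps : R)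
  (Hnonneg : forall k, (1 <= k)%nat -> 0 <= lam k)
  (Hdec : forall k, (1 <= k)%nat -> lam (S k) <= lam k)
  (Hpos1 : 0 < lam 1%nat)
  (HLam : infinite_sum (fun k => lam (S k)) Lam)
  (Hbeta : 0 < beta) (Hs : 0 < s)
  (Hasym : Un_cv (fun k => (lam k / Lam) /
             (beta / (INR k * ln (INR k) * Rpower (ln (ln (INR k))) (1 + s)))) 1)
  (Heps : 0 < eps < 1)
  (N : nat -> nat)
  (HN : forall d, (1 <= d)%nat -> is_nX lam Lam d eps (N d)) :
  Un_cv (fun d => ln (ln (INR (N d))) /
           Rpower (beta * INR d / (s * Rabs (ln (1 - eps ^ 2)))) (1 / s)) 1.
Proof.
  apply Un_cv_ratio_of_bounds.
  - intros d. apply exp_pos.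
  - intros dl Hdl. eapply lnln_nX_upper; eauto.
  - intros dl Hdl. eapply lnln_nX_lower; eauto.
Qed.
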